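(* For any $h,n\in\mathbb{N}$ with $h\le n$ there exists a finite, simple, connected graph $G$ with $h(G)=h$ and $n$ nodes such that, for the set $\mathcal{H}$ of convex bipartitions of $G$, $M_{\mathrm{sd}}(\mathcal{H})=\Omega(h)$.
   Context: Self-directed learning: an unknown labeling $y\in\mathcal{H}$ is fixed; for $t=1,\dots,n$ the learner, knowing $G$ and $\mathcal{H}$ but not $y$, selects a not-yet-selected node, predicts its label, then observes the true label; $M_{\mathrm{sd}}(A,\mathcal{H})$ is the worst-case (over $y\in\mathcal{H}$) number of mistakes of algorithm $A$, and $M_{\mathrm{sd}}(\mathcal{H})=\min_A M_{\mathrm{sd}}(A,\mathcal{H})$. The interval $I(u,v)$ is the set of nodes on at least one shortest $u$–$v$ path; $C\subseteq V$ is convex if $I(a,b)\subseteq C$ for all $a,b\in C$; a convex bipartition is a labeling $V\to\{1,2\}$ with both label classes convex. $h(G)$ is the largest $w$ such that $K_w$ is a minor of $G$. *)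

From mathcomp Require Import all_boot all_order all_algebra.
Set Implicit Arguments. Unset Strict Implicit. Unset Printing Implicit Defensive.

Section Graphs.
Variable V : finType.

Definition simple_graph (e : rel V) : Prop := symmetric e /\ irreflexive e.

Definition connected_graph (e : rel V) : Prop := forall x y : V, connect e x y.

(* p is a u-v walk given as the sequence of nodes after u. *)
Definition uv_path (e : rel V) (u v : V) (p : seq V) : bool :=
  path e u p && (last u p == v).

Definition shortest_path (e : rel V) (u v : V) (p : seq V) : Prop :=
  uv_path e u v p /\ forall q, uv_path e u v q -> size p <= size q.

Definition in_interval (e : rel V) (u v w : V) : Prop :=
  exists p, shortest_path e u v p /\ w \in u :: p.

Definition convex (e : rel V) (C : {set V}) : Prop :=
  forall a b w, a \in C -> b \in C -> in_interval e a b w -> w \in C.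

(* Labels {1,2} encoded as false/true. *)
Definition convex_bipartition (e : rel V) (y : {ffun V -> bool}) : Prop :=
  convex e [set x | ~~ y x] /\ convex e [set x | y x].

Definition induced_connected (e : rel V) (S : {set V}) : Prop :=
  forall x y, x \in S -> y \in S ->
    connect [rel a b | [&& e a b, a \in S & b \in S]] x y.

Definition has_K_minor (e : rel V) (w : nat) : Prop :=
  exists B : 'I_w -> {set V},
    (forall i, B i != set0) /\
    (forall i, induced_connected e (B i)) /\
    (forall i j, i != j -> [disjoint B i & B j]) /\
    (forall i j, i != j -> exists x y, [/\ x \in B i, y \in B j & e x y]).

Definition hadwiger (e : rel V) (h : nat) : Prop :=
  has_K_minor e h /\ forall w, has_K_minor e w -> w <= h.

(* Self-directed learner: from the history of (selected node, revealed
   label) pairs it selects the next node and predicts its label. *)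
Definition learner := seq (V * bool) -> V * bool.

Fixpoint run (A : learner) (y : {ffun V -> bool}) (k : nat)
  : seq (V * bool) * nat :=
  match k with
  | 0 => ([::], 0)
  | k'.+1 =>
      let hm := run A y k' in
      let vp := A hm.1 in
      (rcons hm.1 (vp.1, y vp.1), hm.2 + (vp.2 != y vp.1))
  end.

Definition valid_learner (e : rel V) (A : learner) : Prop :=
  forall y, convex_bipartition e y -> uniq (map fst (run A y #|V|).1).

Definition mistakes (A : learner) (y : {ffun V -> bool}) : nat :=
  (run A y #|V|).2.

End Graphs.

From mathcomp Require Import all_boot all_order all_algebra.
From mathcomp Require Import lra zify.
Import GRing.Theory Num.Theory.
Set Implicit Arguments. Unset Strict Implicit. Unset Printing Implicit Defensive.

(* The graph is K_h on the nodes 0, ..., h-1 with every further node adjacent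
   to 0 only.  A K_w minor either has a clique node in every branch set, so
   w <= h, or has a branch set of leaves, whose only neighbour 0 must then lie
   in every other branch set, so w <= 2; hence h(G) = h.  The clique nodes other
   than 0 are simplicial, and a simplicial node lies on a shortest path only as
   an endpoint; so every labeling that is 2 outside these h-1 nodes is a convex
   bipartition.  As the learner is deterministic, an adversary can simulate it
   and give each of these nodes the label opposite to the prediction made when
   the node is selected, which forces h-1 >= h/2 mistakes. *)

Lemma count_mem_full_uniq (V : finType) (S : {set V}) (s : seq V) :
  uniq s -> size s = #|V| -> count (mem S) s = #|S|.
Proof.
move=> s_uniq s_size.
have s_enum : perm_eq s (enum V).
  apply: uniq_perm (enum_uniq _) _ => //.
  by apply: (uniq_min_size s_uniq _ _).2 => [x _|]; rewrite ?mem_enum // s_size cardE.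
by rewrite cardE /enum_mem -enumT size_filter; apply/permP.
Qed.

Lemma iter_rcons_prefix {T : Type} (f : seq T -> T) (s : seq T) k m : k <= m ->
  exists r, iter m (fun t => rcons t (f t)) s = iter k (fun t => rcons t (f t)) s ++ r.
Proof.
move=> /subnK <-; elim: (m - k) => [|d [r IH]]; first by exists [::]; rewrite cats0.
exists (rcons r (f (iter (d + k) (fun t => rcons t (f t)) s))).
by rewrite addSn /= IH rcons_cat.
Qed.

Section Runs.
Variables (V : finType) (A : learner V) (y : {ffun V -> bool}).

Lemma run_history k :
  (run A y k).1 = iter k (fun s => rcons s ((A s).1, y (A s).1)) [::].
Proof. by elim: k => //= k ->. Qed.

Lemma size_run k : size (run A y k).1 = k.
Proof. by elim: k => //= k IH; rewrite size_rcons IH. Qed.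

Lemma run_fresh k : uniq (map fst (run A y #|V|).1) -> k < #|V| ->
  (A (run A y k).1).1 \notin map fst (run A y k).1.
Proof.
move=> run_uniq lt_k.
have [r] := iter_rcons_prefix (fun s => ((A s).1, y (A s).1)) [::] lt_k.
rewrite -!run_history => run_cat; move: run_uniq.
by rewrite run_cat map_cat cat_uniq /= map_rcons rcons_uniq => /andP[/andP[]].
Qed.

Lemma count_le_mistakes (P : pred V) m :
  (forall k, k < m -> P (A (run A y k).1).1 ->
     (A (run A y k).1).2 != y (A (run A y k).1).1) ->
  count P (map fst (run A y m).1) <= (run A y m).2.
Proof.
elim: m => //= m IH mistake; rewrite map_rcons -cats1 count_cat /= addn0.
apply: leq_add; first by apply: IH => k /ltnW; exact: mistake.
by case: (boolP (P _)) => // /(mistake m (ltnSn m)) ->.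
Qed.

End Runs.

Section Adversary.
Variables (V : finType) (A : learner V) (S : {set V}).

Definition adversary_move (s : seq (V * bool)) : V * bool :=
  ((A s).1, if (A s).1 \in S then ~~ (A s).2 else true).

Definition adversary_history k := iter k (fun s => rcons s (adversary_move s)) [::].

Definition label_in (s : seq (V * bool)) (v : V) : bool :=
  (nth (v, true) s (index v (map fst s))).2.

Lemma label_in_fresh s t v b :
  v \notin map fst s -> label_in (s ++ (v, b) :: t) v = b.
Proof.
move=> v_fresh; rewrite /label_in map_cat index_cat (negbTE v_fresh) /= eqxx addn0.
by rewrite nth_cat size_map ltnn subnn.
Qed.

Definition adversary_labeling : {ffun V -> bool} :=
  [ffun v => if v \in S then label_in (adversary_history #|V|) v else true].

Lemma adversary_labeling_notin v : v \notin S -> adversary_labeling v.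
Proof. by rewrite ffunE => /negbTE ->. Qed.

Lemma adversary_labeling_fresh k : k < #|V| ->
  (A (adversary_history k)).1 \notin map fst (adversary_history k) ->
  adversary_labeling (A (adversary_history k)).1 =
  (adversary_move (adversary_history k)).2.
Proof.
move=> /(iter_rcons_prefix adversary_move [::]) [r hist_cat] v_fresh.
rewrite ffunE; case: ifP => v_S; last by rewrite /adversary_move v_S.
by rewrite /adversary_history hist_cat iterS cat_rcons; apply: label_in_fresh.
Qed.

Hypothesis run_uniq : uniq (map fst (run A adversary_labeling #|V|).1).

Lemma run_adversary_history k : k <= #|V| -> (run A adversary_labeling k).1 = adversary_history k.
Proof.
elim: k => [//|k IH] lt_k.
have run_k := IH (ltnW lt_k).
rewrite [LHS]/= run_k [RHS]iterS -/(adversary_history k).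
congr (rcons _ (_, _)); apply: adversary_labeling_fresh => //.
by rewrite -run_k run_fresh.
Qed.

Theorem adversary_mistakes : #|S| <= mistakes A adversary_labeling.
Proof.
rewrite -(count_mem_full_uniq S run_uniq); last by rewrite size_map size_run.
apply: count_le_mistakes => k lt_k.
have run_k := run_adversary_history (ltnW lt_k).
have v_fresh := run_fresh run_uniq lt_k; rewrite run_k in v_fresh *.
by move=> v_S; rewrite adversary_labeling_fresh // /adversary_move ifT //; case: (A _).2.
Qed.

End Adversary.

Section Graphs.
Variables (V : finType) (e : rel V).

Definition simplicial (w : V) : Prop :=
  forall x z, e x w -> e w z -> x != z -> e x z.

Lemma interval_adjacent {a b w : V} :
  (a == b) || e a b -> in_interval e a b w -> w = a \/ w = b.
Proof.
move=> ab [p [[ab_p p_min] w_p]].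
have size_p : size p <= (a != b).
  case: eqVneq ab => [a_b _ | _ /= e_ab].
    by apply: (p_min [::]); rewrite /uv_path /= a_b.
  by apply: (p_min [:: b]); rewrite /uv_path /= e_ab eqxx.
clear p_min; case: p ab_p w_p size_p => [|c [|d p]] ab_p; rewrite !inE.
- by move=> /eqP; left.
- by case/andP: ab_p => _ /eqP <- /orP[] /eqP; [left | right].
- by case: (a != b).
Qed.

Lemma interval_simplicial {a b w : V} : simplicial w -> in_interval e a b w -> w = a \/ w = b.
Proof.
move=> w_simpl [p [[ab_p p_min] w_p]].
case: (eqVneq w a) => [|w_a]; first by left.
case: (eqVneq w b) => [|w_b]; first by right.
exfalso; move: w_p; rewrite inE (negbTE w_a) /= => w_p.
case/splitPr: w_p ab_p p_min => p1 [|z p2]; rewrite /uv_path cat_path last_cat /=.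
  by rewrite (negbTE w_b) andbF.
set x := last a p1; case/andP=> /and4P[p1_path e_xw e_wz p2_path] last_p2 p_min.
case: (eqVneq x z) => [x_z | x_ne_z].
  have := p_min (p1 ++ p2); rewrite /uv_path cat_path last_cat -/x x_z p1_path p2_path last_p2.
  by rewrite !size_cat /= => /(_ isT); lia.
have := p_min (p1 ++ z :: p2); rewrite /uv_path cat_path last_cat -/x /=.
rewrite p1_path p2_path last_p2 (w_simpl x z) //.
by rewrite !size_cat /= => /(_ isT); lia.
Qed.

Lemma convex_bipartition_simplicial_clique (S : {set V}) (y : {ffun V -> bool}) :
  {in S &, forall a b, a != b -> e a b} -> {in S, forall w, simplicial w} ->
  (forall v, v \notin S -> y v) -> convex_bipartition e y.
Proof.
move=> S_clique S_simpl y_out; split=> a b w; rewrite !inE.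
  move=> y_a y_b; have a_S : a \in S by apply: contraR y_a => /y_out ->.
  have b_S : b \in S by apply: contraR y_b => /y_out ->.
  have ab : (a == b) || e a b by case: eqVneq => //= /S_clique; apply.
  by move=> /(interval_adjacent ab) [] ->.
move=> y_a y_b w_ab; case: (boolP (w \in S)) => [w_S | /y_out //].
by case: (interval_simplicial (S_simpl w w_S) w_ab) => ->.
Qed.

Lemma connected_universal (z : V) :
  symmetric e -> (forall x, x != z -> e z x) -> connected_graph e.
Proof.
move=> e_sym z_univ x y; apply: (connect_trans (y := z)).
  by case: (eqVneq x z) => [-> // | /z_univ]; rewrite e_sym => /connect1.
by case: (eqVneq y z) => [-> // | /z_univ /connect1].
Qed.

Lemma clique_has_K_minor w (f : 'I_w -> V) :
  injective f -> (forall i j, i != j -> e (f i) (f j)) -> has_K_minor e w.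
Proof.
move=> f_inj f_clique; exists (fun i => [set f i]); split; [|split; [|split]].
- by move=> i; apply/set0Pn; exists (f i); rewrite inE.
- by move=> i x z; rewrite !inE => /eqP -> /eqP ->; exact: connect0.
- by move=> i j ij; rewrite disjoints1 inE (inj_eq f_inj).
- by move=> i j ij; exists (f i), (f j); rewrite !inE !eqxx f_clique.
Qed.

Section BranchSets.
Variables (w : nat) (B : 'I_w -> {set V}).
Hypothesis B_disjoint : forall i j, i != j -> [disjoint B i & B j].

Lemma branch_sets_meet_le_card (C : {set V}) :
  (forall i, exists2 x, x \in B i & x \in C) -> w <= #|C|.
Proof.
case/fin_all_exists2=> g g_B g_C.
have g_inj : injective g.
  move=> i j g_ij; apply/eqP; apply: contraT => /B_disjoint ij.
  by have := disjointFr ij (g_B i); rewrite g_ij g_B.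
rewrite -[w]card_ord -cardsT -(card_imset _ g_inj).
by apply/subset_leq_card/subsetP => _ /imsetP[i _ ->].
Qed.

Hypothesis B_adjacent :
  forall i j, i != j -> exists x y, [/\ x \in B i, y \in B j & e x y].

Lemma branch_set_pendant_le2 i (z : V) :
  (forall x y, x \in B i -> e x y -> y = z) -> w <= 2.
Proof.
move=> B_pendant.
have z_B j : j != i -> z \in B j.
  by rewrite eq_sym => /B_adjacent[x [y [x_B y_B /(B_pendant _ _ x_B) <-]]].
have : #|predC1 i| <= 1.
  apply/card_le1_eqP => j k j_i k_i; apply/eqP; apply: contraT => /B_disjoint jk.
  by have := disjointFr jk (z_B k k_i); rewrite z_B.
by rewrite cardC1 card_ord; lia.
Qed.

End BranchSets.
End Graphs.

Lemma widen_ord_inj m p (le_mp : m <= p) : injective (widen_ord le_mp).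
Proof. by move=> i j [] /ord_inj. Qed.

Section CliqueStar.
Variables h n : nat.
Hypotheses (h_gt1 : 1 < h) (h_le : h <= n.+1).

Definition clique_star : rel 'I_n.+1 :=
  fun x y => (x != y) && [|| x == ord0, y == ord0 | (x < h) && (y < h)].

Lemma clique_star_sym : symmetric clique_star.
Proof. by move=> x y; rewrite /clique_star eq_sym orbCA [(y < h) && _]andbC. Qed.

Lemma clique_star_simple : simple_graph clique_star.
Proof. by split; [exact: clique_star_sym | move=> x; rewrite /clique_star eqxx]. Qed.

Lemma clique_star_connected : connected_graph clique_star.
Proof.
apply: (connected_universal (z := ord0)) clique_star_sym _ => x x_0.
by rewrite /clique_star eq_sym x_0 eqxx.
Qed.

Definition clique_nodes := [set x : 'I_n.+1 | x < h].

Lemma widen_ord_clique_nodes (i : 'I_h) : widen_ord h_le i \in clique_nodes.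
Proof. by rewrite inE; exact: (ltn_ord i). Qed.

Lemma ord0_clique_nodes : ord0 \in clique_nodes.
Proof. by rewrite inE; exact: ltnW h_gt1. Qed.

Lemma card_clique_nodes : #|clique_nodes| = h.
Proof.
have -> : clique_nodes = widen_ord h_le @: setT.
  apply/setP => x; apply/idP/imsetP => [| [i _ ->]]; last exact: widen_ord_clique_nodes.
  rewrite inE => x_h.
  by exists (Ordinal x_h); last apply: val_inj.
by rewrite card_imset ?cardsT ?card_ord //; exact: widen_ord_inj.
Qed.

Lemma clique_star_clique : {in clique_nodes &, forall x y, x != y -> clique_star x y}.
Proof. by move=> x y; rewrite !inE /clique_star => x_h y_h ->; rewrite x_h y_h !orbT. Qed.

Lemma clique_star_leaf x y : x \notin clique_nodes -> clique_star x y -> y = ord0.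
Proof.
rewrite inE -leqNgt => h_x /andP[_ /or3P[/eqP x_0 | /eqP // | /andP[x_h _]]].
  by move: h_x; rewrite x_0 /=; lia.
by rewrite ltnNge h_x in x_h.
Qed.

Lemma clique_star_hadwiger : hadwiger clique_star h.
Proof.
split.
  apply: (clique_has_K_minor (f := widen_ord h_le)) => [|i j ij]; first exact: widen_ord_inj.
  by rewrite clique_star_clique ?widen_ord_clique_nodes ?(inj_eq widen_ord_inj).
move=> w [B [_ [_ [B_disjoint B_adjacent]]]].
case: (boolP [forall i, [exists x in B i, x \in clique_nodes]]) => [/forallP meet | ].
  rewrite -card_clique_nodes; apply: (branch_sets_meet_le_card B_disjoint) => i.
  by have /existsP[x /andP[]] := meet i; exists x.
rewrite negb_forall => /existsP[i]; rewrite negb_exists => /forallP avoid.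
apply: leq_trans h_gt1.
apply: (branch_set_pendant_le2 B_disjoint B_adjacent (i := i) (z := ord0)).
by move=> x y x_B; apply: clique_star_leaf; have := avoid x; rewrite x_B.
Qed.

Definition simplicial_nodes := clique_nodes :\ ord0.

Lemma card_simplicial_nodes : #|simplicial_nodes| = h.-1.
Proof. by rewrite -card_clique_nodes (cardsD1 ord0 clique_nodes) ord0_clique_nodes. Qed.

Lemma clique_star_simplicial : {in simplicial_nodes, forall w, simplicial clique_star w}.
Proof.
move=> w /setD1P[w_0 _] x z.
have nbr_clique v : clique_star v w -> v \in clique_nodes.
  case/andP=> _ /or3P[/eqP -> | w_eq0 | /andP[v_h _]].
  - exact: ord0_clique_nodes.
  - by rewrite w_eq0 in w_0.
  - by rewrite inE.
move=> /nbr_clique x_C; rewrite clique_star_sym => /nbr_clique z_C.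
exact: clique_star_clique.
Qed.

End CliqueStar.

Local Open Scope ring_scope.

Theorem mainTheorem9 :
  exists (c : rat) (h0 : nat), 0 < c /\
    forall h n : nat, (h0 <= h)%N -> (h <= n)%N ->
      exists e : rel 'I_n,
        [/\ simple_graph e, connected_graph e, hadwiger e h &
          forall A : learner 'I_n, valid_learner e A ->
            exists y : {ffun 'I_n -> bool},
              convex_bipartition e y /\ c * h%:R <= (mistakes A y)%:R].
Proof.
exists (1 / 2), 2%N; split => [|h [|n] h_gt1 h_le]; [by [] | by lia |].
exists (@clique_star h n); split.
- exact: clique_star_simple.
- exact: clique_star_connected.
- exact: clique_star_hadwiger.
move=> A A_valid; pose y := adversary_labeling A (@simplicial_nodes h n).
have y_convex : convex_bipartition (@clique_star h n) y.
  apply: (convex_bipartition_simplicial_clique (S := @simplicial_nodes h n)).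
  - by move=> a b /setD1P[_ a_C] /setD1P[_ b_C]; apply: clique_star_clique.
  - exact: clique_star_simplicial.
  - exact: adversary_labeling_notin.
exists y; split => //.
have : (#|@simplicial_nodes h n| <= mistakes A y)%N := adversary_mistakes (A_valid y y_convex).
rewrite card_simplicial_nodes // => h_mistakes.
have : h%:R <= 2 * (mistakes A y)%:R :> rat.
  by rewrite -natrM ler_nat -subn1 in h_mistakes *; lia.
lra.
Qed.
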